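(* Consider the primal SDP $\tau=\inf\{\sum_{j\in[p]}\langle\mathbf{C}_j,\mathbf{X}_j\rangle:\ \mathbf{X}_j\in\mathcal{S}_j^+\ (j\in[p]),\ \sum_{j\in[p]}\mathcal{A}_j\mathbf{X}_j=\mathbf{b}\}$ and its dual $\rho=\sup\{\mathbf{b}^\top\mathbf{y}:\ \mathbf{y}\in\mathbb{R}^\zeta,\ \mathbf{C}_j-\mathcal{A}_j^\top\mathbf{y}\in\mathcal{S}_j^+\ (j\in[p])\}$. Assume (i) strong duality: $\rho=\tau\in\mathbb{R}$; and (ii) constant trace property: there exist $a_1,\dots,a_p>0$ such that whenever $\mathbf{X}_j\in\mathcal{S}_j$ ($j\in[p]$) satisfy $\sum_{j\in[p]}\mathcal{A}_j\mathbf{X}_j=\mathbf{b}$, then $\mathrm{trace}(\mathbf{X}_j)=a_j$ for all $j\in[p]$. Define $\psi:\mathbb{R}^\zeta\to\mathbb{R}$, $\psi(\mathbf{y}):=\mathbf{b}^\top\mathbf{y}+\sum_{j\in[p]}a_j\lambda_{\min}(\mathbf{C}_j-\mathcal{A}_j^\top\mathbf{y})$. Then $\tau=\sup_{\mathbf{y}\in\mathbb{R}^\zeta}\psi(\mathbf{y})$. Moreover, if the dual SDP has an optimal solution, then $\sup_{\mathbf{y}\in\mathbb{R}^\zeta}\psi(\mathbf{y})$ is attained.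
   Context: For $j\in[p]$, $\mathcal{S}_j$ is the space of real symmetric block-diagonal matrices $\mathrm{diag}(\mathbf{X}_{1,j},\dots,\mathbf{X}_{\omega_j,j})$ with fixed block sizes $s^{(1,j)},\dots,s^{(\omega_j,j)}\ge1$, with inner product $\langle\mathbf{A},\mathbf{B}\rangle=\mathrm{trace}(\mathbf{B}^\top\mathbf{A})$, and $\mathcal{S}_j^+$ is the set of positive semidefinite elements of $\mathcal{S}_j$. Given $\mathbf{C}_j\in\mathcal{S}_j$, $\mathbf{A}_{i,j}\in\mathcal{S}_j$ ($i\in[\zeta]$) and $\mathbf{b}\in\mathbb{R}^\zeta$: $\mathcal{A}_j\mathbf{X}:=(\langle\mathbf{A}_{1,j},\mathbf{X}\rangle,\dots,\langle\mathbf{A}_{\zeta,j},\mathbf{X}\rangle)$ and its adjoint $\mathcal{A}_j^\top\mathbf{z}:=\sum_{i\in[\zeta]}z_i\mathbf{A}_{i,j}$. $\lambda_{\min}$ denotes the smallest eigenvalue of a real symmetric matrix. *)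

From HB Require Import structures.
From mathcomp Require Import all_boot all_order all_algebra.
From mathcomp Require Import classical_sets reals constructive_ereal ereal.
Set Implicit Arguments. Unset Strict Implicit. Unset Printing Implicit Defensive.
Import Order.TTheory GRing.Theory Num.Theory.
Local Open Scope ring_scope.
Local Open Scope classical_set_scope.

(* Block structure given by the sequence of block sizes s = [s1; ...; s_omega];
   the matrix size is sumn s. *)
Definition same_block (s : seq nat) (i k : nat) : bool :=
  has (fun t => (sumn (take t s) <= i < sumn (take t.+1 s))%N &&
                (sumn (take t s) <= k < sumn (take t.+1 s))%N) (iota 0 (size s)).

Definition inS {R : realType} (s : seq nat) (X : 'M[R]_(sumn s)) : Prop :=
  X^T = X /\ forall i k : 'I_(sumn s), ~~ same_block s i k -> X i k = 0.

Definition psd {R : realType} (n : nat) (X : 'M[R]_n) : Prop :=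
  X^T = X /\ forall x : 'cV[R]_n, 0 <= (x^T *m X *m x) ord0 ord0.

Definition inSplus {R : realType} (s : seq nat) (X : 'M[R]_(sumn s)) : Prop :=
  inS X /\ psd X.

Definition inner {R : realType} (n : nat) (A B : 'M[R]_n) : R := \tr (B^T *m A).

Definition Aop {R : realType} (zeta n : nat) (A : 'I_zeta -> 'M[R]_n)
  (X : 'M[R]_n) : 'cV[R]_zeta := \col_i inner (A i) X.

Definition Aadj {R : realType} (zeta n : nat) (A : 'I_zeta -> 'M[R]_n)
  (z : 'cV[R]_zeta) : 'M[R]_n := \sum_i z i ord0 *: A i.

Definition dotv {R : realType} (zeta : nat) (b y : 'cV[R]_zeta) : R :=
  \sum_i b i ord0 * y i ord0.

Definition lambda_min {R : realType} (n : nat) (A : 'M[R]_n) : R :=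
  inf [set a : R | eigenvalue A a].

From HB Require Import structures.
From mathcomp Require Import all_boot all_order all_algebra.
From mathcomp Require Import classical_sets reals constructive_ereal ereal.
From mathcomp Require Import complex ring.
Import Order.TTheory GRing.Theory Num.Theory.
Set Implicit Arguments. Unset Strict Implicit. Unset Printing Implicit Defensive.
Local Open Scope ring_scope.
Local Open Scope classical_set_scope.

(* For any primal-feasible X and any y, each slack S_j = C_j - A_j^T y satisfies
   <S_j, X_j> >= lambda_min(S_j) trace(X_j) = a_j lambda_min(S_j), the equality
   being the constant trace property; summing gives psi(y) <= <C, X>, hence
   sup psi <= tau.  For a dual-feasible y every slack is psd, so its lambda_min
   is nonnegative and psi(y) >= b^T y; hence sup psi >= rho = tau, and a dual
   optimum y attains tau = b^T y <= psi(y) <= tau.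
   The eigenvalue bound is proved over R[i]: the spectral theorem writes S as
   P^* D P with P unitary and D real diagonal, so <S, X> = sum_k d_k (P X P^* )_kk
   where the diagonal entries of P X P^* are nonnegative and d_k >= lambda_min(S). *)

Section EigenvalueFacts.
Variable F : fieldType.

Lemma eigenvalue_diag_mx n (d : 'rV[F]_n) c :
  eigenvalue (diag_mx d) c = [exists i, d 0 i == c].
Proof.
apply/idP/existsP => [/eigenvalueP [v vd /matrix0Pn [i0 [k]]] | [i /eqP <-]].
  rewrite ord1 => vk; exists k; apply/eqP.
  move/matrixP: vd => /(_ 0 k); rewrite mul_mx_diag !mxE [_ * d _ _]mulrC.
  exact: mulIf.
apply/eigenvalueP; exists (delta_mx 0 i).
  apply/matrixP => r j; rewrite mul_mx_diag !mxE mulrC.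
  by have [-> | _] := eqVneq j i; rewrite ?andbF ?mulr0.
by apply/matrix0Pn; exists 0, i; rewrite mxE !eqxx oner_eq0.
Qed.

Lemma eigenvalue_similar n (P D : 'M[F]_n) c : P \in unitmx ->
  eigenvalue (invmx P *m D *m P) c = eigenvalue D c.
Proof.
move=> Pu; apply/eigenvalueP/eigenvalueP => [[v vM v0] | [w wD w0]].
  exists (v *m invmx P); first by rewrite scalemxAl -vM !mulmxA mulmxK.
  by apply: contraNneq v0 => /(congr1 (mulmx^~ P)); rewrite mulmxKV // mul0mx => ->.
exists (w *m P); first by rewrite scalemxAl -wD !mulmxA mulmxK.
by apply: contraNneq w0 => /(congr1 (mulmx^~ (invmx P))); rewrite mulmxK // mul0mx => ->.
Qed.

End EigenvalueFacts.

Section Complexification.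
Variable R : realType.
Local Open Scope complex_scope.
Local Open Scope sesquilinear_scope.
Local Notation cplx := (map_mx (real_complex R)).
Local Notation reM := (map_mx (@complex.Re R)).
Local Notation imM := (map_mx (@complex.Im R)).

Lemma cplx_rect m n (v : 'M[R[i]]_(m, n)) :
  v = cplx (reM v) + 'i *: cplx (imM v).
Proof. by apply/matrixP => k l; rewrite !mxE [LHS]complexE. Qed.

Lemma conj_cplx_rect m n (v : 'M[R[i]]_(m, n)) :
  map_mx Num.conj v = cplx (reM v) - 'i *: cplx (imM v).
Proof.
have conj_real (x : R) : Num.conj x%:C = x%:C.
  by apply/conj_Creal/complex_realP; exists x.
have conj_i : Num.conj 'i = - 'i :> R[i].
  by apply/eqP; rewrite eq_complex /= oppr0 !eqxx.
apply/matrixP => k l; rewrite !mxE {1}[v k l]complexE rmorphD rmorphM /=.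
by rewrite !conj_real conj_i mulNr.
Qed.

Lemma cplx_form_rect n (X : 'M[R]_n) (v : 'rV[R[i]]_n)
    (a := reM v) (b := imM v) : X^T = X ->
  (v *m cplx X *m v ^t*) 0 0
    = ((a *m X *m a^T) 0 0 + (b *m X *m b^T) 0 0)%:C.
Proof.
move=> X_sym; rewrite conj_cplx_rect {1}[v]cplx_rect -!map_trmx -/a -/b.
have cplx_form (u w : 'rV[R]_n) :
    cplx u *m cplx X *m (cplx w)^T = cplx (u *m X *m w^T) by rewrite !map_mxM map_trmx.
have ba_ab : b *m X *m a^T = (a *m X *m b^T)^T.
  by rewrite !trmx_mul trmxK X_sym mulmxA.
rewrite !(mulmxDl, mulmxDr, mulmxBr, mulmxN) -!scalemxAl -!scalemxAr.
rewrite !cplx_form ba_ab scalerA.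
move: (a *m X *m a^T) (a *m X *m b^T) (b *m X *m b^T) => M1 M2 M3.
have ii : 'i * 'i = -1 :> R[i] by rewrite -expr2 sqr_i.
rewrite !mxE ii rmorphD /=; ring.
Qed.

Lemma psd_cplx_form_ge0 n (X : 'M[R]_n) (v : 'rV[R[i]]_n) :
  psd X -> 0 <= (v *m cplx X *m v ^t*) 0 0.
Proof.
move=> [X_sym X_form]; rewrite cplx_form_rect // ler0c.
have row_form (u : 'rV[R]_n) : 0 <= (u *m X *m u^T) 0 0.
  by have := X_form u^T; rewrite trmxK.
exact: addr_ge0.
Qed.

Section SymmetricSpectrum.
Variables (n : nat) (S : 'M[R]_n).
Hypothesis S_sym : S^T = S.
Local Notation P := (spectralmx (cplx S)).
Local Notation d := (spectral_diag (cplx S)).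

Lemma cplx_sym_hermsymmx : cplx S \is hermsymmx.
Proof.
apply: realsym_hermsym.
  apply/is_hermitianmxP; rewrite expr0 scale1r.
  by apply/matrixP => k l; rewrite !mxE -[in LHS]S_sym mxE.
by apply/mxOverP => k l; rewrite mxE; apply/complex_realP; exists (S k l).
Qed.

Lemma cplx_sym_spectral : cplx S = invmx P *m diag_mx d *m P.
Proof. exact/orthomx_spectralP/hermitian_normalmx/cplx_sym_hermsymmx. Qed.

Lemma spectral_diag_sym_real k : d 0 k = (complex.Re (d 0 k))%:C.
Proof.
by rewrite RRe_real // (mxOverP (hermitian_spectral_diag_real cplx_sym_hermsymmx)).
Qed.

Lemma eigenvalue_symP x : eigenvalue S x <-> exists k, x = complex.Re (d 0 k).
Proof.
rewrite -(eigenvalue_map (real_complex R)) [in X in eigenvalue X]cplx_sym_spectral.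
rewrite eigenvalue_similar ?spectral_unit // eigenvalue_diag_mx.
split=> [/existsP [k /eqP dk] | [k ->]]; first by exists k; rewrite dk.
by apply/existsP; exists k; apply/eqP; exact: spectral_diag_sym_real.
Qed.

Lemma lambda_min_le_spectral_diag k : (lambda_min S)%:C <= d 0 k.
Proof.
have eig_lb : has_lbound [set x | eigenvalue S x].
  exists (- \sum_l `|complex.Re (d 0 l)|) => _ /eigenvalue_symP [l ->].
  rewrite lerNl; apply: le_trans (ler_norm _) _; rewrite normrN (bigD1 l) //= lerDl.
  exact: sumr_ge0.
rewrite spectral_diag_sym_real lecR; apply: (ge_inf eig_lb).
by apply/eigenvalue_symP; exists k.
Qed.

Lemma lambda_min_mul_trace_le (X : 'M[R]_n) :
  psd X -> lambda_min S * \tr X <= inner S X.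
Proof.
move=> X_psd; have P_unitary := spectral_unitarymx (cplx S).
set Pstar := P ^t*.
have Pstar_inv : invmx P = Pstar by exact: invmx_unitary.
set M := P *m cplx X *m Pstar.
have trX : \tr (cplx X) = \tr M.
  by rewrite /M -mulmxA mxtrace_mulC -mulmxA -Pstar_inv mulVmx ?spectral_unit // mulmx1.
have trXS : \tr (cplx X *m cplx S) = \tr (M *m diag_mx d).
  by rewrite [in LHS]cplx_sym_spectral Pstar_inv /M !mulmxA mxtrace_mulC !mulmxA.
have M_ge0 k : 0 <= M k k.
  have := psd_cplx_form_ge0 (row k P) X_psd.
  suff -> : M k k = (row k P *m cplx X *m (row k P) ^t*) 0 0 by [].
  rewrite !mxE; apply: eq_bigr => l _; rewrite !mxE; congr (_ * _).
  by apply: eq_bigr => m _; rewrite !mxE.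
rewrite /inner X_psd.1 -lecR rmorphM /= -!trace_map_mx map_mxM trX trXS.
rewrite /mxtrace mulr_sumr; apply: ler_sum => k _.
rewrite mul_mx_diag [X in _ <= X]mxE mulrC.
by apply: ler_wpM2l; [exact: M_ge0 | exact: lambda_min_le_spectral_diag].
Qed.

End SymmetricSpectrum.
End Complexification.

Lemma lambda_min_ge0 (R : realType) n (S : 'M[R]_n) : psd S -> 0 <= lambda_min S.
Proof.
move=> [_ S_form]; rewrite /lambda_min.
have [[x0 Sx0] | no_eig] := boolp.pselect (exists x, eigenvalue S x); last first.
  suff -> : [set x : R | eigenvalue S x] = set0 by rewrite inf0.
  by apply/seteqP; split=> // x Sx; apply: no_eig; exists x.
apply: lb_le_inf; first by exists x0.
move=> x /eigenvalueP [v vS /matrix0Pn [i0 [k]]]; rewrite ord1 => vk.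
have vvT_gt0 : 0 < (v *m v^T) 0 0.
  rewrite mxE (bigD1 k) //= mxE; apply: ltr_pwDl; first by rewrite -expr2 exprn_even_gt0.
  by apply: sumr_ge0 => l _; rewrite mxE -expr2 sqr_ge0.
by have := S_form v^T; rewrite trmxK vS -scalemxAl mxE pmulr_lge0.
Qed.

Section InnerProduct.
Variable R : realType.

Lemma innerBl n (M N X : 'M[R]_n) : inner (M - N) X = inner M X - inner N X.
Proof. by rewrite /inner mulmxBr linearB. Qed.

Lemma dotv_suml zeta I (r : seq I) (F : I -> 'cV[R]_zeta) y :
  dotv (\sum_(i <- r) F i) y = \sum_(i <- r) dotv (F i) y.
Proof.
rewrite /dotv exchange_big /=; apply: eq_bigr => k _.
by rewrite summxE mulr_suml.
Qed.

Lemma inner_Aadj zeta n (A : 'I_zeta -> 'M[R]_n) y X :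
  inner (Aadj A y) X = dotv (Aop A X) y.
Proof.
rewrite /inner /Aadj /dotv mulmx_sumr raddf_sum; apply: eq_bigr => i _.
by rewrite /= -scalemxAr mxtraceZ mxE mulrC.
Qed.

Lemma Aadj_sym zeta n (A : 'I_zeta -> 'M[R]_n) y :
  (forall i, (A i)^T = A i) -> (Aadj A y)^T = Aadj A y.
Proof.
by move=> A_sym; rewrite /Aadj linear_sum; apply: eq_bigr => i _; rewrite linearZ /= A_sym.
Qed.

End InnerProduct.

Section SpectralDual.
Variables (R : realType) (p zeta : nat) (s : 'I_p -> seq nat).
Variables (C : forall j : 'I_p, 'M[R]_(sumn (s j))).
Variables (A : forall j : 'I_p, 'I_zeta -> 'M[R]_(sumn (s j))).
Variables (b : 'cV[R]_zeta) (a : 'I_p -> R).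

Definition dual_slack j (y : 'cV[R]_zeta) := C j - Aadj (A j) y.

Definition spectral_dual_obj (y : 'cV[R]_zeta) :=
  dotv b y + \sum_j a j * lambda_min (dual_slack j y).

Lemma primal_obj_split (X : forall j : 'I_p, 'M[R]_(sumn (s j))) y :
  \sum_j Aop (A j) (X j) = b ->
  \sum_j inner (C j) (X j) = \sum_j inner (dual_slack j y) (X j) + dotv b y.
Proof.
move=> <-; rewrite dotv_suml -big_split /=; apply: eq_bigr => j _.
by rewrite innerBl inner_Aadj subrK.
Qed.

Hypothesis C_inS : forall j, inS (C j).
Hypothesis A_inS : forall j i, inS (A j i).

Lemma dual_slack_sym j y : (dual_slack j y)^T = dual_slack j y.
Proof. by rewrite linearB /= (C_inS j).1 Aadj_sym // => i; exact: (A_inS j i).1. Qed.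

Hypothesis trace_const : forall X : forall j : 'I_p, 'M[R]_(sumn (s j)),
  (forall j, inS (X j)) -> \sum_j Aop (A j) (X j) = b -> forall j, \tr (X j) = a j.

Lemma spectral_dual_obj_le_primal y (X : forall j : 'I_p, 'M[R]_(sumn (s j))) :
  (forall j, inSplus (X j)) -> \sum_j Aop (A j) (X j) = b ->
  spectral_dual_obj y <= \sum_j inner (C j) (X j).
Proof.
move=> X_feas X_b; rewrite /spectral_dual_obj (primal_obj_split y X_b) addrC lerD2r.
apply: ler_sum => j _; rewrite -(trace_const (fun j => (X_feas j).1) X_b j) mulrC.
apply: lambda_min_mul_trace_le; [exact: dual_slack_sym | exact: (X_feas j).2].
Qed.

Hypothesis a_ge0 : forall j, 0 <= a j.

Lemma dual_obj_le_spectral_dual_obj y :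
  (forall j, inSplus (dual_slack j y)) -> dotv b y <= spectral_dual_obj y.
Proof.
move=> y_feas; rewrite lerDl; apply: sumr_ge0 => j _.
exact: mulr_ge0 (a_ge0 j) (lambda_min_ge0 (y_feas j).2).
Qed.

End SpectralDual.

Unset Implicit Arguments.

Theorem lemma5 (R : realType) (p zeta : nat) (s : 'I_p -> seq nat)
  (C : forall j : 'I_p, 'M[R]_(sumn (s j)))
  (A : forall j : 'I_p, 'I_zeta -> 'M[R]_(sumn (s j)))
  (b : 'cV[R]_zeta) (tau : R) (a : 'I_p -> R) :
  (forall j, (0 < size (s j))%N /\ all (fun k => (0 < k)%N) (s j)) ->
  (forall j, inS (C j)) ->
  (forall j i, inS (A j i)) ->
  (* (i) strong duality: rho = tau, a real number *)
  ereal_inf [set (\sum_j inner (C j) (X j))%:E |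
               X in [set X : forall j : 'I_p, 'M[R]_(sumn (s j)) |
                     (forall j, inSplus (X j)) /\ \sum_j Aop (A j) (X j) = b]]
    = tau%:E ->
  ereal_sup [set (dotv b y)%:E |
               y in [set y : 'cV[R]_zeta | forall j, inSplus (C j - Aadj (A j) y)]]
    = tau%:E ->
  (* (ii) constant trace property with constants a_j > 0 *)
  (forall j, 0 < a j) ->
  (forall X : forall j : 'I_p, 'M[R]_(sumn (s j)),
     (forall j, inS (X j)) -> \sum_j Aop (A j) (X j) = b ->
     forall j, \tr (X j) = a j) ->
  let psi := fun y : 'cV[R]_zeta =>
    dotv b y + \sum_j a j * lambda_min (C j - Aadj (A j) y) in
  ereal_sup [set (psi y)%:E | y in [set: 'cV[R]_zeta]] = tau%:E /\
  ((exists y : 'cV[R]_zeta,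
      (forall j, inSplus (C j - Aadj (A j) y)) /\
      (dotv b y)%:E = ereal_sup [set (dotv b y')%:E |
               y' in [set y' : 'cV[R]_zeta | forall j, inSplus (C j - Aadj (A j) y')]]) ->
   exists y0 : 'cV[R]_zeta,
     (psi y0)%:E = ereal_sup [set (psi y)%:E | y in [set: 'cV[R]_zeta]]).
Proof.
move=> _ C_inS A_inS primal_opt dual_opt a_gt0 trace_const psi.
have a_ge0 j : 0 <= a j by exact: ltW.
have psi_le_tau y : ((psi y)%:E <= tau%:E)%E.
  rewrite -primal_opt; apply: le_ereal_inf_tmp => _ [X [X_feas X_b] <-].
  by rewrite lee_fin; exact: spectral_dual_obj_le_primal.
have dual_le_psi y : (forall j, inSplus (C j - Aadj (A j) y)) -> dotv b y <= psi y.
  exact: dual_obj_le_spectral_dual_obj.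
have sup_psi : ereal_sup [set (psi y)%:E | y in [set: 'cV[R]_zeta]] = tau%:E.
  apply/eqP; rewrite eq_le; apply/andP; split.
    by apply: ge_ereal_sup => _ [y _ <-].
  rewrite -{1}dual_opt; apply: ge_ereal_sup => _ [y y_feas <-].
  apply: le_trans (ereal_sup_ubound _); last by exists y.
  by rewrite lee_fin; exact: dual_le_psi.
split=> // -[y [y_feas y_opt]]; exists y.
by rewrite sup_psi; apply/eqP; rewrite eq_le psi_le_tau -dual_opt -y_opt lee_fin dual_le_psi.
Qed.
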